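(* Let $\Sigma$ be a complete smooth fan in $N_{\mathbb{R}}\cong\mathbb{R}^2$ with rays generated by primitive vectors $n_1,\dots,n_r\in N$ in anticlockwise order, maximal cones $\nu_j=\operatorname{cone}(n_j,n_{j+1})$ (indices mod $r$), self-intersection numbers $b_j$ and vectors $u_j\in M$ as in the context. (1) If $\vartheta$ is a semi-integral support function on $\Sigma$, then its kinks $(\ell_1,\dots,\ell_r)$ are integers forming a set of twisting numbers. (2) Conversely, every set of twisting numbers $(\ell_1,\dots,\ell_r)$ is the set of kinks of a semi-integral support function on $\Sigma$, which is unique up to adding an integral linear function (an element of $M$).
   Context: $M$ is the dual lattice of $N$. The self-intersection number $b_j$ of the toric curve corresponding to the ray $\mathbb{R}_{\ge0}n_j$ is defined by $n_{j-1}+n_{j+1}=-b_j n_j$. Let $u_j\in M$ be the unique primitive vector with $\langle u_j,n_j\rangle=0$ and $\langle u_j,n_{j+1}\rangle>0$. A semi-integral support function is a continuous function $\vartheta:N_{\mathbb{R}}\to\mathbb{R}$ which is linear on each maximal cone $\nu_j$ and satisfies $\vartheta(n_j)\in\tfrac12+\mathbb{Z}$ for all $j$. Writing $\vartheta_j\in M_{\mathbb{R}}$ for the linear function $\vartheta|_{\nu_j}$, the kink $\ell_j$ of $\vartheta$ at the ray $n_j$ is the real number with $\vartheta_j-\vartheta_{j-1}=\tfrac{\ell_j}{2}u_j$. A set of twisting numbers is an $r$-tuple of integers $(\ell_1,\dots,\ell_r)$ such that $\ell_j\equiv b_j \pmod 2$ for all $j$ and $\sum_{j=1}^r\ell_j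 u_j=0$. *)

(* N = Z*Z, N_R = R*R, M = Z*Z, M_R = R*R with the standard pairing. *)
From Stdlib Require Import Reals ZArith List Lra Lia.
From Coquelicot Require Import Coquelicot.
Open Scope R_scope.

Definition zdet (v w : Z * Z) : Z := (fst v * snd w - snd v * fst w)%Z.
Definition zpair (m n : Z * Z) : Z := (fst m * fst n + snd m * snd n)%Z.
Definition zprimitive (v : Z * Z) : Prop := Z.gcd (fst v) (snd v) = 1%Z.
Definition toR2 (v : Z * Z) : R * R := (IZR (fst v), IZR (snd v)).
Definition rpair (m x : R * R) : R := fst m * fst x + snd m * snd x.

(* cyclic indices 0..r-1 (paper's 1..r); index arithmetic mod r *)
Definition idx (r j : nat) : nat := Nat.modulo j r.
Definition nxt (r j : nat) : nat := Nat.modulo (S j) r.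
Definition prv (r j : nat) : nat := Nat.modulo (j + r - 1) r.

(* Complete smooth fan in R^2 with rays n 0, ..., n (r-1) (primitive) in
   anticlockwise order: the arguments are strictly increasing inside one turn,
   and consecutive rays form a positively oriented Z-basis. *)
Definition complete_smooth_fan (r : nat) (n : nat -> Z * Z) : Prop :=
  (forall j, (j < r)%nat -> zprimitive (n j)) /\
  (exists (th rho : nat -> R),
      (forall j, (j < r)%nat -> 0 < rho j /\
          toR2 (n j) = (rho j * cos (th j), rho j * sin (th j))) /\
      (forall j, (S j < r)%nat -> th j < th (S j)) /\
      (0 < r)%nat /\ th (r - 1)%nat < th 0%nat + 2 * PI) /\
  (forall j, (j < r)%nat -> zdet (n j) (n (nxt r j)) = 1%Z).

Definition selfint_numbers (r : nat) (n : nat -> Z * Z) (b : nat -> Z) : Prop :=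
  forall j, (j < r)%nat ->
    ((fst (n (prv r j)) + fst (n (nxt r j)))%Z = (- b j * fst (n j))%Z /\
     (snd (n (prv r j)) + snd (n (nxt r j)))%Z = (- b j * snd (n j))%Z).

Definition u_vectors (r : nat) (n : nat -> Z * Z) (u : nat -> Z * Z) : Prop :=
  forall j, (j < r)%nat ->
    zprimitive (u j) /\ zpair (u j) (n j) = 0%Z /\ (zpair (u j) (n (nxt r j)) > 0)%Z.

Definition in_cone (r : nat) (n : nat -> Z * Z) (j : nat) (x : R * R) : Prop :=
  exists a c : R, 0 <= a /\ 0 <= c /\
    x = (a * IZR (fst (n j)) + c * IZR (fst (n (nxt r j))),
         a * IZR (snd (n j)) + c * IZR (snd (n (nxt r j)))).

Definition semi_integral_support_with (r : nat) (n : nat -> Z * Z)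
    (vt : R * R -> R) (theta : nat -> R * R) : Prop :=
  (forall x : R * R, continuous vt x) /\
  (forall j, (j < r)%nat -> forall x, in_cone r n j x -> vt x = rpair (theta j) x) /\
  (forall j, (j < r)%nat -> exists k : Z, vt (toR2 (n j)) = IZR k + / 2).

Definition semi_integral_support (r : nat) (n : nat -> Z * Z) (vt : R * R -> R) : Prop :=
  exists theta, semi_integral_support_with r n vt theta.

Definition are_kinks (r : nat) (u : nat -> Z * Z) (theta : nat -> R * R)
    (ell : nat -> R) : Prop :=
  forall j, (j < r)%nat ->
    fst (theta j) - fst (theta (prv r j)) = ell j / 2 * IZR (fst (u j)) /\
    snd (theta j) - snd (theta (prv r j)) = ell j / 2 * IZR (snd (u j)).

Definition zsum (r : nat) (f : nat -> Z) : Z :=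
  fold_right Z.add 0%Z (map f (seq 0 r)).

Definition twisting_numbers (r : nat) (b : nat -> Z) (u : nat -> Z * Z)
    (ell : nat -> Z) : Prop :=
  (forall j, (j < r)%nat -> Z.Even (ell j - b j)) /\
  zsum r (fun j => ell j * fst (u j))%Z = 0%Z /\
  zsum r (fun j => ell j * snd (u j))%Z = 0%Z.

(* The rays [n_j], [n_{j+1}] form a basis of [N] of determinant 1, so a covector is determined,
   integrally, by its pairings with them (Cramer's rule), and [u_j] is [n_j] turned by a quarter
   turn.  If [theta_j] is the piece of [vartheta] on [nu_j], then [theta_j - theta_{j-1}] vanishes
   on [n_j], hence equals [c_j u_j] with [c_j = <theta_j - theta_{j-1}, n_{j+1}>]; the relation
   [n_{j-1} + n_{j+1} = -b_j n_j] rewrites [c_j] as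
   [vartheta(n_{j+1}) + b_j vartheta(n_j) + vartheta(n_{j-1})], whose double is an integer
   congruent to [b_j] mod 2 when the three values lie in [1/2 + Z].  The kinks telescope around
   the fan, so [sum_j l_j u_j = 0].
   Conversely, start from the [theta_0] with pairing [1/2] on [n_0] and [n_1] and add the
   [(l_j/2) u_j]: the same identity read backwards keeps the values at the rays in [1/2 + Z], and
   [sum_j l_j u_j = 0] makes the last kink close up.  The pieces glue to a continuous function
   because, the rays being ordered by argument, two distinct cones meet only along a common ray,
   on which consecutive pieces agree.  Two solutions with the same kinks differ by a single
   covector with integral pairings on [n_0], [n_1], i.e. by an element of [M]. *)

From Stdlib Require Import Reals ZArith List Lra Lia Psatz ClassicalEpsilon.
From Coquelicot Require Import Coquelicot.
Open Scope R_scope.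

Lemma nxt_small r j : (S j < r)%nat -> nxt r j = S j.
Proof. intros; unfold nxt; apply Nat.mod_small; lia. Qed.

Lemma nxt_last r j : S j = r -> nxt r j = 0%nat.
Proof. intros <-; apply Nat.Div0.mod_same. Qed.

Lemma nxt_lt r j : (j < r)%nat -> (nxt r j < r)%nat.
Proof. intros; apply Nat.mod_upper_bound; lia. Qed.

Lemma prv_0 r : (0 < r)%nat -> prv r 0 = (r - 1)%nat.
Proof. intros; unfold prv; apply Nat.mod_small; lia. Qed.

Lemma prv_S r j : (S j < r)%nat -> prv r (S j) = j.
Proof.
  intros; unfold prv; replace (S j + r - 1)%nat with (j + 1 * r)%nat by lia.
  rewrite Nat.Div0.mod_add; apply Nat.mod_small; lia.
Qed.

Lemma prv_lt r j : (j < r)%nat -> (prv r j < r)%nat.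
Proof. intros; apply Nat.mod_upper_bound; lia. Qed.

Lemma nxt_prv r j : (j < r)%nat -> nxt r (prv r j) = j.
Proof.
  intros; destruct j as [|j].
  - rewrite prv_0 by lia; apply nxt_last; lia.
  - rewrite prv_S by lia; apply nxt_small; lia.
Qed.

Lemma prv_nxt r j : (j < r)%nat -> prv r (nxt r j) = j.
Proof.
  intros; destruct (Nat.eq_dec (S j) r).
  - rewrite nxt_last, prv_0 by lia; lia.
  - rewrite nxt_small by lia; apply prv_S; lia.
Qed.

Lemma zsum_S m f : zsum (S m) f = (zsum m f + f m)%Z.
Proof.
  unfold zsum; rewrite seq_S, map_app, fold_right_app; simpl.
  induction (map f (seq 0 m)); simpl; lia.
Qed.

Lemma IZR_zsum_telescope r (f : nat -> Z) (g : nat -> R) :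
  (0 < r)%nat -> (forall j, (0 < j < r)%nat -> IZR (f j) = g j - g (pred j)) ->
  IZR (zsum r f) = IZR (f 0%nat) + g (pred r) - g 0%nat.
Proof.
  induction r as [|r IH]; intros Hr Hf; [lia|].
  rewrite zsum_S, plus_IZR; destruct r as [|r].
  - unfold zsum; simpl; ring.
  - rewrite IH, (Hf (S r)) by (lia || (intros; apply Hf; lia)); simpl; ring.
Qed.

Lemma zsum_cyclic_diff r (f : nat -> Z) (g : nat -> R) :
  (0 < r)%nat -> (forall j, (j < r)%nat -> IZR (f j) = g j - g (prv r j)) -> zsum r f = 0%Z.
Proof.
  intros Hr Hf; apply eq_IZR.
  rewrite (IZR_zsum_telescope r f g Hr).
  - rewrite (Hf 0%nat Hr), prv_0 by exact Hr.
    replace (pred r) with (r - 1)%nat by lia; ring.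
  - intros [|j] Hj; [lia|]; rewrite Hf, prv_S by lia; reflexivity.
Qed.

Lemma cyclic_diff_0 r (f : nat -> Z) (g : nat -> R) :
  (0 < r)%nat -> (forall j, (0 < j < r)%nat -> IZR (f j) = g j - g (prv r j)) ->
  zsum r f = 0%Z -> IZR (f 0%nat) = g 0%nat - g (prv r 0).
Proof.
  intros Hr Hf Hsum.
  assert (Htel := IZR_zsum_telescope r f g Hr).
  rewrite Hsum, prv_0 in * by auto.
  replace (r - 1)%nat with (pred r) by lia.
  enough (0 = IZR (f 0%nat) + g (pred r) - g 0%nat) by lra.
  apply Htel; intros j Hj; rewrite Hf by lia.
  destruct j as [|j]; [lia|]; rewrite prv_S by lia; reflexivity.
Qed.

Definition rot (v : Z * Z) : Z * Z := (- snd v, fst v)%Z.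

Definition rdet (x y : R * R) : R := fst x * snd y - snd x * fst y.

Lemma rdet_IZR v w : rdet (toR2 v) (toR2 w) = IZR (zdet v w).
Proof. unfold rdet, toR2, zdet; simpl; rewrite minus_IZR, !mult_IZR; ring. Qed.

Lemma rpair_rot v x : rpair (toR2 (rot v)) x = rdet (toR2 v) x.
Proof. unfold rpair, rdet, toR2, rot; simpl; rewrite opp_IZR; ring. Qed.

Lemma rpair_shift (A B : R * R) c (m : Z * Z) x :
  fst A - fst B = c * IZR (fst m) -> snd A - snd B = c * IZR (snd m) ->
  rpair A x = rpair B x + c * rpair (toR2 m) x.
Proof.
  intros H1 H2; unfold rpair, toR2; simpl.
  replace (fst A) with (fst B + c * IZR (fst m)) by lra.
  replace (snd A) with (snd B + c * IZR (snd m)) by lra; ring.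
Qed.

(* Cramer's rule for the basis [v, w] of [N] *)
Lemma rpair_dual_basis (d : R * R) (v w : Z * Z) :
  zdet v w = 1%Z ->
  d = (rpair d (toR2 v) * IZR (snd w) - rpair d (toR2 w) * IZR (snd v),
       rpair d (toR2 w) * IZR (fst v) - rpair d (toR2 v) * IZR (fst w)).
Proof.
  intros Hd; apply (f_equal IZR) in Hd; rewrite <- rdet_IZR in Hd.
  destruct d as [d1 d2]; unfold rdet, rpair, toR2 in *; simpl in *; f_equal.
  - transitivity (d1 * (IZR (fst v) * IZR (snd w) - IZR (snd v) * IZR (fst w))); [rewrite Hd|]; ring.
  - transitivity (d2 * (IZR (fst v) * IZR (snd w) - IZR (snd v) * IZR (fst w))); [rewrite Hd|]; ring.
Qed.

Lemma eq_rot_of_orth (m v w : Z * Z) :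
  zprimitive m -> zpair m v = 0%Z -> (zpair m w > 0)%Z -> zdet v w = 1%Z -> m = rot v.
Proof.
  destruct m as [a c], v as [p q], w as [p' q']; unfold zprimitive, zpair, zdet, rot; simpl.
  intros Hm Hv Hw Hd; set (t := (a * p' + c * q')%Z) in *.
  assert (Ha : a = (- t * q)%Z).
  { transitivity (a * (p * q' - q * p'))%Z; [rewrite Hd; ring|].
    transitivity (- t * q + q' * (a * p + c * q))%Z; [unfold t; ring | rewrite Hv; ring]. }
  assert (Hc : c = (t * p)%Z).
  { transitivity (c * (p * q' - q * p'))%Z; [rewrite Hd; ring|].
    transitivity (t * p - p' * (a * p + c * q))%Z; [unfold t; ring | rewrite Hv; ring]. }
  assert (Hqp : Z.gcd (- q) p = 1%Z) by (apply Z.bezout_1_gcd; exists p', q'; lia).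
  rewrite Ha, Hc, Z.mul_opp_l, <- Z.mul_opp_r, Z.gcd_mul_mono_l, Hqp in Hm.
  assert (Ht : t = 1%Z) by lia.
  rewrite Ha, Hc, Ht; f_equal; ring.
Qed.

Lemma rpair_selfint (A : R * R) (np nj nn : Z * Z) (bj : Z) :
  (fst np + fst nn)%Z = (- bj * fst nj)%Z /\ (snd np + snd nn)%Z = (- bj * snd nj)%Z ->
  rpair A (toR2 nn) = - IZR bj * rpair A (toR2 nj) - rpair A (toR2 np).
Proof.
  intros [H1 H2]; apply (f_equal IZR) in H1, H2.
  rewrite plus_IZR, mult_IZR, opp_IZR in H1, H2.
  unfold rpair, toR2; simpl.
  replace (IZR (fst nn)) with (- IZR bj * IZR (fst nj) - IZR (fst np)) by lra.
  replace (IZR (snd nn)) with (- IZR bj * IZR (snd nj) - IZR (snd np)) by lra; ring.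
Qed.

Lemma kink_of_pairings (A B : R * R) (np nj nn : Z * Z) (bj : Z) :
  zdet nj nn = 1%Z ->
  (fst np + fst nn)%Z = (- bj * fst nj)%Z /\ (snd np + snd nn)%Z = (- bj * snd nj)%Z ->
  rpair A (toR2 nj) = rpair B (toR2 nj) ->
  let c := rpair A (toR2 nn) + IZR bj * rpair B (toR2 nj) + rpair B (toR2 np) in
  fst A - fst B = c * IZR (fst (rot nj)) /\ snd A - snd B = c * IZR (snd (rot nj)).
Proof.
  intros Hd Hs HAB c.
  assert (Hdiff : forall y, rpair (fst A - fst B, snd A - snd B) y = rpair A y - rpair B y)
    by (intros; unfold rpair; simpl; ring).
  pose proof (rpair_dual_basis (fst A - fst B, snd A - snd B) nj nn Hd) as Hcr.
  rewrite !Hdiff, HAB, (rpair_selfint B np nj nn bj Hs) in Hcr.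
  injection Hcr as H1 H2; unfold rot; simpl; rewrite opp_IZR.
  rewrite H1, H2 at 1; unfold c; split; ring.
Qed.

Definition half_integer (x : R) : Prop := exists k : Z, x = IZR k + / 2.

Lemma half_integer_sub a c : half_integer a -> half_integer c -> exists k : Z, a - c = IZR k.
Proof. intros [k1 ->] [k2 ->]; exists (k1 - k2)%Z; rewrite minus_IZR; ring. Qed.

Lemma half_integer_twice_comb a c e (b : Z) :
  half_integer a -> half_integer c -> half_integer e ->
  exists l : Z, 2 * (a + IZR b * c + e) = IZR l /\ Z.Even (l - b).
Proof.
  intros [k1 ->] [k2 ->] [k3 ->]; exists (2 * (k1 + b * k2 + k3 + 1) + b)%Z; split.
  - rewrite plus_IZR, mult_IZR, !plus_IZR, mult_IZR; field.
  - exists (k1 + b * k2 + k3 + 1)%Z; lia.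
Qed.

Lemma half_integer_step a c (b l : Z) :
  half_integer a -> half_integer c -> Z.Even (l - b) ->
  half_integer (- IZR b * c - a + IZR l / 2).
Proof.
  intros [k1 ->] [k2 ->] [w Hw]; exists (w - b * k2 - k1 - 1)%Z.
  replace l with (b + 2 * w)%Z by lia.
  rewrite !minus_IZR, plus_IZR, !mult_IZR; field.
Qed.

Lemma in_cone_iff r n j x :
  zdet (n j) (n (nxt r j)) = 1%Z ->
  in_cone r n j x <-> 0 <= rdet (toR2 (n j)) x /\ 0 <= rdet x (toR2 (n (nxt r j))).
Proof.
  intros Hd; apply (f_equal IZR) in Hd; rewrite <- rdet_IZR in Hd.
  unfold in_cone, rdet, toR2 in *; simpl in *.
  destruct (n j) as [p q], (n (nxt r j)) as [p' q'], x as [x1 x2]; simpl in *.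
  set (D := IZR p * IZR q' - IZR q * IZR p') in Hd.
  split.
  - intros (a & c & Ha & Hc & E); injection E as -> ->.
    replace (IZR p * (a * IZR q + c * IZR q') - IZR q * (a * IZR p + c * IZR p')) with (c * D)
      by (unfold D; ring).
    replace ((a * IZR p + c * IZR p') * IZR q' - (a * IZR q + c * IZR q') * IZR p') with (a * D)
      by (unfold D; ring).
    rewrite Hd; lra.
  - intros [H1 H2]; exists (x1 * IZR q' - x2 * IZR p'), (IZR p * x2 - IZR q * x1).
    repeat split; try lra; f_equal.
    + transitivity (x1 * D); [rewrite Hd; ring | unfold D; ring].
    + transitivity (x2 * D); [rewrite Hd; ring | unfold D; ring].
Qed.

Lemma in_cone_ray r n j : in_cone r n j (toR2 (n j)).
Proof. exists 1, 0; repeat split; try lra; unfold toR2; f_equal; ring. Qed.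

Lemma in_cone_next_ray r n j : in_cone r n j (toR2 (n (nxt r j))).
Proof. exists 0, 1; repeat split; try lra; unfold toR2; f_equal; ring. Qed.

Lemma continuous_rpair (m x : R * R) : continuous (rpair m) x.
Proof.
  destruct x as [x1 x2]; unfold rpair.
  apply (continuous_plus (fun y : R * R => fst m * fst y) (fun y => snd m * snd y)).
  - apply (continuous_mult (fun _ => fst m) fst); [apply continuous_const | apply continuous_fst].
  - apply (continuous_mult (fun _ => snd m) snd); [apply continuous_const | apply continuous_snd].
Qed.

Lemma locally_rpair_neg (m x : R * R) : rpair m x < 0 -> locally x (fun y => rpair m y < 0).
Proof. intros H; exact (continuous_rpair m x _ (open_lt 0 _ H)). Qed.

Lemma locally_notin_cone r n j x :
  zdet (n j) (n (nxt r j)) = 1%Z -> ~ in_cone r n j x ->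
  locally x (fun y => ~ in_cone r n j y).
Proof.
  intros Hd Hx; rewrite (in_cone_iff _ _ _ _ Hd) in Hx.
  set (v := toR2 (n j)) in *; set (w := toR2 (n (nxt r j))) in *.
  assert (Hv : forall y, rdet v y = rpair (- snd v, fst v) y)
    by (intros; unfold rdet, rpair; simpl; ring).
  assert (Hw : forall y, rdet y w = rpair (snd w, - fst w) y)
    by (intros; unfold rdet, rpair; simpl; ring).
  destruct (Rlt_or_le (rdet v x) 0) as [H|H].
  - rewrite Hv in H; refine (filter_imp _ _ _ (locally_rpair_neg _ _ H)); intros y Hy.
    rewrite (in_cone_iff _ _ _ _ Hd); fold v w; rewrite Hv; intros [Hy' _]; lra.
  - assert (H' : rdet x w < 0) by (apply Rnot_le_lt; intros H'; apply Hx; split; auto).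
    rewrite Hw in H'; refine (filter_imp _ _ _ (locally_rpair_neg _ _ H')); intros y Hy.
    rewrite (in_cone_iff _ _ _ _ Hd); fold v w; rewrite Hw; intros [_ Hy']; lra.
Qed.

Lemma filter_forall_lt {T : Type} {F : (T -> Prop) -> Prop} {FF : Filter F}
    (r : nat) (P : nat -> T -> Prop) :
  (forall k, (k < r)%nat -> F (P k)) -> F (fun y => forall k, (k < r)%nat -> P k y).
Proof.
  induction r as [|r IH]; intros H.
  - apply filter_forall; intros y k Hk; lia.
  - apply (filter_imp (fun y => (forall k, (k < r)%nat -> P k y) /\ P r y)).
    + intros y [Hy Hr] k Hk; destruct (Nat.eq_dec k r) as [->|]; auto; apply Hy; lia.
    + apply filter_and; [apply IH; intros; apply H | apply H]; lia.
Qed.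

Lemma continuous_glued r n (theta : nat -> R * R) (vt : R * R -> R) :
  (forall j, (j < r)%nat -> zdet (n j) (n (nxt r j)) = 1%Z) ->
  (forall x, exists j, (j < r)%nat /\ in_cone r n j x) ->
  (forall j x, (j < r)%nat -> in_cone r n j x -> vt x = rpair (theta j) x) ->
  forall x, continuous vt x.
Proof.
  intros Hdet Hcover Hvt x; apply filterlim_locally; intros eps.
  assert (Hcones : locally x (fun y =>
            forall k, (k < r)%nat -> in_cone r n k y -> in_cone r n k x)).
  { apply filter_forall_lt; intros k Hk.
    destruct (classic (in_cone r n k x)) as [Hx|Hx].
    - apply filter_forall; auto.
    - refine (filter_imp _ _ _ (locally_notin_cone r n k x (Hdet k Hk) Hx)); tauto. }
  assert (Hpieces : locally x (fun y => forall k, (k < r)%nat ->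
                      ball (rpair (theta k) x) eps (rpair (theta k) y))).
  { apply filter_forall_lt; intros k _.
    exact (proj1 (filterlim_locally _ _) (continuous_rpair _ x) eps). }
  refine (filter_imp _ _ _ (filter_and _ _ Hcones Hpieces)); intros y [Hc Hp].
  destruct (Hcover y) as (k & Hk & Hy).
  rewrite (Hvt k y Hk Hy), (Hvt k x Hk (Hc k Hk Hy)); exact (Hp k Hk).
Qed.

Definition polar (s t : R) : R * R := (s * cos t, s * sin t).

Lemma rdet_polar a t c p : rdet (polar a t) (polar c p) = a * c * sin (p - t).
Proof. unfold rdet, polar; simpl; rewrite sin_minus; ring. Qed.

Lemma unit_circle_angle c d : c * c + d * d = 1 -> exists t, c = cos t /\ d = sin t.
Proof.
  intros H; assert (Hc : -1 <= c <= 1) by nra.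
  assert (Hs : sin (acos c) = Rabs d).
  { rewrite sin_acos, <- sqrt_Rsqr_abs by exact Hc; f_equal; unfold Rsqr; lra. }
  destruct (Rle_or_lt 0 d) as [Hd|Hd].
  - exists (acos c); rewrite cos_acos, Hs, Rabs_pos_eq by assumption; auto.
  - exists (- acos c); rewrite cos_neg, sin_neg, cos_acos, Hs, Rabs_left by assumption.
    split; [reflexivity | ring].
Qed.

Lemma polar_exists x : x <> (0, 0) -> exists s t, 0 < s /\ x = polar s t.
Proof.
  destruct x as [x1 x2]; intros Hx.
  assert (Hpos : 0 < x1 * x1 + x2 * x2).
  { destruct (Req_dec x1 0) as [->|H1].
    - assert (H2 : x2 <> 0) by (intros ->; auto).
      pose proof (Rlt_0_sqr x2 H2); unfold Rsqr in *; lra.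
    - pose proof (Rlt_0_sqr x1 H1); unfold Rsqr in *; nra. }
  set (s := sqrt (x1 * x1 + x2 * x2)).
  assert (Hs : 0 < s) by (apply sqrt_lt_R0; lra).
  assert (Hss : s * s = x1 * x1 + x2 * x2) by (apply sqrt_sqrt; lra).
  destruct (unit_circle_angle (x1 / s) (x2 / s)) as (t & Hc & Hd).
  { replace (x1 / s * (x1 / s) + x2 / s * (x2 / s)) with ((x1 * x1 + x2 * x2) / (s * s))
      by (field; lra).
    rewrite Hss; field; lra. }
  exists s, t; split; auto; unfold polar; rewrite <- Hc, <- Hd; f_equal; field; lra.
Qed.

Lemma sin_period_Z x (k : Z) : sin (x + 2 * IZR k * PI) = sin x.
Proof.
  destruct (Z.le_ge_cases 0 k) as [Hk|Hk].
  - rewrite <- (Z2Nat.id k Hk), <- INR_IZR_INZ; apply sin_period.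
  - rewrite <- (sin_period (x + 2 * IZR k * PI) (Z.to_nat (- k))), INR_IZR_INZ, Z2Nat.id,
      opp_IZR by lia.
    f_equal; ring.
Qed.

Lemma angle_reduce a t : exists k : Z, a <= t + 2 * IZR k * PI < a + 2 * PI.
Proof.
  pose proof PI_RGT_0 as Hpi.
  set (q := (t - a) / (2 * PI)).
  assert (Hq : q * (2 * PI) = t - a) by (unfold q; field; lra).
  destruct (Zfloor_bound q) as [H1 H2].
  exists (- Zfloor q)%Z; rewrite opp_IZR; split; nra.
Qed.

Lemma sin_nonneg_sector a c t :
  0 < c - a < PI ->
  (0 <= sin (t - a) /\ 0 <= sin (c - t) <-> exists k : Z, a <= t + 2 * IZR k * PI <= c).
Proof.
  intros Hac; pose proof PI_RGT_0 as Hpi; split.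
  - intros [H1 H2]; destruct (angle_reduce a t) as (k & Hk); exists k.
    set (s := t + 2 * IZR k * PI) in *.
    rewrite <- (sin_period_Z (t - a) k) in H1; rewrite <- (sin_period_Z (c - t) (- k)) in H2.
    replace (t - a + 2 * IZR k * PI) with (s - a) in H1 by (unfold s; ring).
    replace (c - t + 2 * IZR (- k) * PI) with (c - s) in H2 by (unfold s; rewrite opp_IZR; ring).
    assert (s - a <= PI).
    { apply Rnot_lt_le; intros Hlt; pose proof (sin_lt_0 (s - a) Hlt); lra. }
    assert (0 <= c - s).
    { apply Rnot_lt_le; intros Hlt; pose proof (sin_lt_0_var (c - s)); lra. }
    lra.
  - intros (k & Hk).
    rewrite <- (sin_period_Z (t - a) k), <- (sin_period_Z (c - t) (- k)), opp_IZR.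
    split; apply sin_ge_0; lra.
Qed.

Lemma interval_index (T : nat -> R) r t :
  T 0%nat <= t < T r -> exists j, (j < r)%nat /\ T j <= t <= T (S j).
Proof.
  induction r as [|r IH]; intros [H1 H2]; [lra|].
  destruct (Rle_or_lt (T r) t) as [H|H].
  - exists r; split; [lia | lra].
  - destruct (IH (conj H1 H)) as (j & Hj & Hjt); exists j; split; [lia | exact Hjt].
Qed.

Section FanGeometry.

Variables (r : nat) (n : nat -> Z * Z) (th rho : nat -> R).
Hypothesis r_pos : (0 < r)%nat.
Hypothesis n_polar : forall j, (j < r)%nat -> 0 < rho j /\ toR2 (n j) = polar (rho j) (th j).
Hypothesis th_incr : forall j, (S j < r)%nat -> th j < th (S j).
Hypothesis th_turn : th (r - 1)%nat < th 0%nat + 2 * PI.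
Hypothesis n_det : forall j, (j < r)%nat -> zdet (n j) (n (nxt r j)) = 1%Z.

(* Arguments of the rays unrolled over one turn, so that the wrap-around cone [nu_{r-1}] is also
   the sector between [ray_arg (r - 1)] and [ray_arg r]. *)
Definition ray_arg (k : nat) : R := if Nat.ltb k r then th k else th 0%nat + 2 * PI.

Lemma ray_arg_lt k : (k < r)%nat -> ray_arg k = th k.
Proof. intros Hk; unfold ray_arg; rewrite (proj2 (Nat.ltb_lt k r) Hk); reflexivity. Qed.

Lemma ray_arg_r : ray_arg r = ray_arg 0%nat + 2 * PI.
Proof. rewrite (ray_arg_lt 0 r_pos); unfold ray_arg; rewrite Nat.ltb_irrefl; reflexivity. Qed.

Lemma ray_arg_strict i k : (i < k)%nat -> (k <= r)%nat -> ray_arg i < ray_arg k.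
Proof.
  assert (Hstep : forall m, (S m <= r)%nat -> ray_arg m < ray_arg (S m)).
  { intros m Hm; rewrite ray_arg_lt by lia.
    destruct (Nat.eq_dec (S m) r) as [Hm'|Hne].
    - rewrite Hm', ray_arg_r, (ray_arg_lt 0 r_pos).
      replace m with (r - 1)%nat by lia; exact th_turn.
    - rewrite ray_arg_lt by lia; apply th_incr; lia. }
  induction k as [|k IH]; intros Hik Hk; [lia|].
  destruct (Nat.eq_dec i k) as [->|Hne]; [apply Hstep; lia|].
  specialize (IH ltac:(lia) ltac:(lia)); specialize (Hstep k Hk); lra.
Qed.

Lemma ray_arg_le_iff i k : (i <= r)%nat -> (k <= r)%nat -> (ray_arg i <= ray_arg k <-> (i <= k)%nat).
Proof.
  intros Hi Hk; split.
  - intros H; apply Nat.nlt_ge; intros Hki; pose proof (ray_arg_strict k i Hki Hi); lra.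
  - intros H; destruct (Nat.eq_dec i k) as [->|Hne]; [lra|].
    left; apply ray_arg_strict; lia.
Qed.

Lemma ray_arg_range k : (k <= r)%nat -> ray_arg 0%nat <= ray_arg k <= ray_arg 0%nat + 2 * PI.
Proof.
  intros Hk; rewrite <- ray_arg_r, !ray_arg_le_iff by lia; lia.
Qed.

Lemma ray_polar j : (j < r)%nat -> toR2 (n j) = polar (rho j) (ray_arg j).
Proof. intros Hj; rewrite ray_arg_lt by exact Hj; apply n_polar, Hj. Qed.

Lemma next_ray_polar j : (j < r)%nat -> toR2 (n (nxt r j)) = polar (rho (nxt r j)) (ray_arg (S j)).
Proof.
  intros Hj; destruct (Nat.eq_dec (S j) r) as [Hj'|Hne].
  - rewrite nxt_last, Hj', ray_arg_r, ray_polar by lia; unfold polar.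
    replace (ray_arg 0 + 2 * PI) with (ray_arg 0 + 2 * INR 1 * PI) by (simpl; ring).
    rewrite cos_period, sin_period; reflexivity.
  - rewrite nxt_small by lia; apply ray_polar; lia.
Qed.

Lemma rdet_ray_polar j s t :
  (j < r)%nat -> rdet (toR2 (n j)) (polar s t) = rho j * s * sin (t - ray_arg j).
Proof. intros Hj; rewrite ray_polar, rdet_polar; auto. Qed.

Lemma rdet_polar_next_ray j s t :
  (j < r)%nat -> rdet (polar s t) (toR2 (n (nxt r j))) = s * rho (nxt r j) * sin (ray_arg (S j) - t).
Proof. intros Hj; rewrite next_ray_polar, rdet_polar; auto. Qed.

Lemma ray_arg_gap j : (j < r)%nat -> 0 < ray_arg (S j) - ray_arg j < PI.
Proof.
  intros Hj; pose proof PI_RGT_0 as Hpi.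
  assert (Hlt := ray_arg_strict j (S j) ltac:(lia) ltac:(lia)).
  assert (H1 := n_det j Hj); apply (f_equal IZR) in H1.
  rewrite <- rdet_IZR, (ray_polar j Hj), rdet_polar_next_ray in H1 by exact Hj.
  assert (Hsin : 0 < sin (ray_arg (S j) - ray_arg j)).
  { destruct (n_polar j Hj) as [Hr _]; destruct (n_polar (nxt r j) (nxt_lt r j Hj)) as [Hr' _].
    assert (Hrr : 0 < rho j * rho (nxt r j)) by (apply Rmult_lt_0_compat; assumption).
    apply Rnot_le_lt; intros Hle; nra. }
  split; [lra|]; apply Rnot_le_lt; intros Hge.
  destruct (ray_arg_range j ltac:(lia)), (ray_arg_range (S j) ltac:(lia)).
  pose proof (sin_le_0 _ Hge ltac:(lra)); lra.
Qed.

Lemma in_cone_polar j s t :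
  (j < r)%nat -> 0 < s ->
  in_cone r n j (polar s t) <-> exists k : Z, ray_arg j <= t + 2 * IZR k * PI <= ray_arg (S j).
Proof.
  intros Hj Hs; rewrite <- (sin_nonneg_sector _ _ t (ray_arg_gap j Hj)).
  rewrite (in_cone_iff _ _ _ _ (n_det j Hj)), rdet_ray_polar, rdet_polar_next_ray by exact Hj.
  destruct (n_polar j Hj) as [Hr _]; destruct (n_polar (nxt r j) (nxt_lt r j Hj)) as [Hr' _].
  assert (Hpos : forall a y, 0 < a -> (0 <= a * y <-> 0 <= y))
    by (intros a y Ha; split; intros; nra).
  rewrite !Hpos by nra; reflexivity.
Qed.

Lemma fan_cover x : exists j, (j < r)%nat /\ in_cone r n j x.
Proof.
  destruct (classic (x = (0, 0))) as [->|Hx].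
  - exists 0%nat; split; [exact r_pos|]; exists 0, 0; repeat split; try lra; f_equal; ring.
  - destruct (polar_exists x Hx) as (s & t & Hs & ->).
    destruct (angle_reduce (ray_arg 0) t) as (k & Hk); rewrite <- ray_arg_r in Hk.
    destruct (interval_index ray_arg r _ Hk) as (j & Hj & Hjt).
    exists j; split; [exact Hj|]; apply in_cone_polar; eauto.
Qed.

Lemma sectors_meet i j (d : Z) t1 t2 :
  (i < j)%nat -> (j < r)%nat ->
  ray_arg i <= t1 <= ray_arg (S i) -> ray_arg j <= t2 <= ray_arg (S j) ->
  t2 = t1 + 2 * IZR d * PI ->
  (S i = j /\ t2 = ray_arg j) \/ (i = 0%nat /\ S j = r /\ t1 = ray_arg i).
Proof.
  intros Hij Hj H1 H2 Ht; pose proof PI_RGT_0 as Hpi.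
  assert (Hsi : ray_arg (S i) <= ray_arg j) by (apply ray_arg_le_iff; lia).
  destruct (ray_arg_range i ltac:(lia)), (ray_arg_range (S j) ltac:(lia)).
  assert (Hd : (0 <= d <= 1)%Z) by (split; apply le_IZR; nra).
  destruct (Z.eq_dec d 0) as [->|Hd0].
  - left; assert (Heq : ray_arg (S i) = ray_arg j) by lra.
    assert (S i <= j /\ j <= S i)%nat as [] by (split; apply ray_arg_le_iff; lra || lia).
    split; [lia | lra].
  - replace d with 1%Z in Ht by lia; right.
    assert (Hi0 : ray_arg i <= ray_arg 0) by lra.
    assert (Hr : ray_arg r <= ray_arg (S j)) by (rewrite ray_arg_r; lra).
    apply ray_arg_le_iff in Hi0, Hr; try lia.
    assert (i = 0%nat) as -> by lia; repeat split; [lia | lra].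
Qed.

Lemma rdet_ray_zero j s t (k : Z) :
  (j < r)%nat -> t + 2 * IZR k * PI = ray_arg j -> rdet (toR2 (n j)) (polar s t) = 0.
Proof.
  intros Hj Ht; rewrite rdet_ray_polar by exact Hj.
  replace (t - ray_arg j) with (0 + 2 * IZR (- k) * PI) by (rewrite opp_IZR; lra).
  rewrite sin_period_Z, sin_0; ring.
Qed.

Lemma fan_cones_meet i j x :
  x <> (0, 0) -> (i < r)%nat -> (j < r)%nat -> in_cone r n i x -> in_cone r n j x ->
  i = j \/ (j = nxt r i /\ rdet (toR2 (n j)) x = 0) \/ (i = nxt r j /\ rdet (toR2 (n i)) x = 0).
Proof.
  intros Hx Hi Hj Hci Hcj; destruct (polar_exists x Hx) as (s & t & Hs & ->).
  apply in_cone_polar in Hci as (ki & Hki); auto; apply in_cone_polar in Hcj as (kj & Hkj); auto.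
  assert (Hmeet : forall i j ki kj, (i < j)%nat -> (j < r)%nat ->
            ray_arg i <= t + 2 * IZR ki * PI <= ray_arg (S i) ->
            ray_arg j <= t + 2 * IZR kj * PI <= ray_arg (S j) ->
            (j = nxt r i /\ rdet (toR2 (n j)) (polar s t) = 0) \/
            (i = nxt r j /\ rdet (toR2 (n i)) (polar s t) = 0)).
  { clear i j Hi Hj ki kj Hki Hkj; intros i j ki kj Hij Hj Hki Hkj.
    destruct (sectors_meet i j (kj - ki) _ _ Hij Hj Hki Hkj) as [[Hs' Ht] | (-> & Hs' & Ht)].
    - rewrite minus_IZR; ring.
    - left; split; [rewrite nxt_small; lia|]; eapply rdet_ray_zero; eauto.
    - right; split; [rewrite nxt_last; auto|]; eapply rdet_ray_zero; eauto; lia. }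
  destruct (lt_eq_lt_dec i j) as [[Hij | <-] | Hji]; auto; right.
  - apply (Hmeet i j ki kj); auto.
  - destruct (Hmeet j i kj ki) as [H | H]; auto.
Qed.

End FanGeometry.

Lemma choice_below (r : nat) (P : nat -> Z -> Prop) :
  (forall j, (j < r)%nat -> exists k, P j k) ->
  exists f : nat -> Z, forall j, (j < r)%nat -> P j (f j).
Proof.
  intros H; apply (choice (fun j k => (j < r)%nat -> P j k)); intros j.
  destruct (lt_dec j r) as [Hj|Hj].
  - destruct (H j Hj) as [k Hk]; exists k; auto.
  - exists 0%Z; intros; lia.
Qed.

Fixpoint pieces_of_kinks (u : nat -> Z * Z) (ell : nat -> Z) (t0 : R * R) (j : nat) : R * R :=
  match j with
  | O => t0
  | S j => let t := pieces_of_kinks u ell t0 j in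
           (fst t + IZR (ell (S j)) / 2 * IZR (fst (u (S j))),
            snd t + IZR (ell (S j)) / 2 * IZR (snd (u (S j))))
  end.

Section SupportFunctions.

Variables (r : nat) (n : nat -> Z * Z) (b : nat -> Z) (u : nat -> Z * Z).
Hypothesis fan : complete_smooth_fan r n.
Hypothesis selfint : selfint_numbers r n b.
Hypothesis uvec : u_vectors r n u.

Lemma fan_r_pos : (0 < r)%nat.
Proof. destruct fan as (_ & (th & rho & _ & _ & Hr & _) & _); exact Hr. Qed.

Lemma fan_det j : (j < r)%nat -> zdet (n j) (n (nxt r j)) = 1%Z.
Proof. destruct fan as (_ & _ & Hdet); apply Hdet. Qed.

Lemma cones_cover x : exists j, (j < r)%nat /\ in_cone r n j x.
Proof.
  destruct fan as (_ & (th & rho & Hpol & Hinc & Hr & Hturn) & Hdet); eapply fan_cover; eauto.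
Qed.

Lemma cones_meet i j x :
  x <> (0, 0) -> (i < r)%nat -> (j < r)%nat -> in_cone r n i x -> in_cone r n j x ->
  i = j \/ (j = nxt r i /\ rdet (toR2 (n j)) x = 0) \/ (i = nxt r j /\ rdet (toR2 (n i)) x = 0).
Proof.
  destruct fan as (_ & (th & rho & Hpol & Hinc & Hr & Hturn) & Hdet); eapply fan_cones_meet; eauto.
Qed.

Lemma u_rot j : (j < r)%nat -> u j = rot (n j).
Proof.
  intros Hj; destruct (uvec j Hj) as (Hp & H0 & H1).
  exact (eq_rot_of_orth _ _ _ Hp H0 H1 (fan_det j Hj)).
Qed.

Lemma rpair_kink (theta : nat -> R * R) (l : nat -> R) j x :
  are_kinks r u theta l -> (j < r)%nat ->
  rpair (theta j) x = rpair (theta (prv r j)) x + l j / 2 * rdet (toR2 (n j)) x.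
Proof.
  intros Hk Hj; destruct (Hk j Hj) as [K1 K2].
  rewrite (rpair_shift _ _ _ _ x K1 K2), u_rot, rpair_rot by exact Hj; reflexivity.
Qed.

Lemma glue_pieces (theta : nat -> R * R) (l : nat -> R) i j x :
  are_kinks r u theta l -> (i < r)%nat -> (j < r)%nat -> in_cone r n i x -> in_cone r n j x ->
  rpair (theta i) x = rpair (theta j) x.
Proof.
  intros Hk Hi Hj Hci Hcj.
  destruct (classic (x = (0, 0))) as [->|Hx]; [unfold rpair; simpl; ring|].
  assert (Hadj : forall i, (i < r)%nat -> rdet (toR2 (n (nxt r i))) x = 0 ->
                   rpair (theta (nxt r i)) x = rpair (theta i) x).
  { intros m Hm H0; rewrite (rpair_kink theta l), prv_nxt, H0 by (auto using nxt_lt); ring. }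
  destruct (cones_meet i j x Hx Hi Hj Hci Hcj) as [-> | [[-> H0] | [-> H0]]].
  - reflexivity.
  - symmetry; auto.
  - auto.
Qed.

Lemma kinks_of_support_function (vt : R * R -> R) (theta : nat -> R * R) :
  semi_integral_support_with r n vt theta ->
  exists ell : nat -> Z, are_kinks r u theta (fun j => IZR (ell j)) /\ twisting_numbers r b u ell.
Proof.
  intros (_ & Hlin & Hhalf).
  assert (Hkink : forall j, (j < r)%nat -> exists l : Z,
            (fst (theta j) - fst (theta (prv r j)) = IZR l / 2 * IZR (fst (u j)) /\
             snd (theta j) - snd (theta (prv r j)) = IZR l / 2 * IZR (snd (u j))) /\
            Z.Even (l - b j)).
  { intros j Hj.
    assert (Hp : (prv r j < r)%nat) by exact (prv_lt r j Hj).
    assert (Hjp : n j = n (nxt r (prv r j))) by (rewrite nxt_prv by exact Hj; reflexivity).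
    assert (Hjj : rpair (theta (prv r j)) (toR2 (n j)) = vt (toR2 (n j))).
    { rewrite Hjp; symmetry; apply Hlin, in_cone_next_ray; exact Hp. }
    destruct (half_integer_twice_comb (vt (toR2 (n (nxt r j)))) (vt (toR2 (n j)))
                (vt (toR2 (n (prv r j)))) (b j)) as (l & Hl & Hev);
      try apply Hhalf; auto using nxt_lt.
    exists l; split; [|exact Hev]; rewrite u_rot by exact Hj.
    replace (IZR l / 2) with (rpair (theta j) (toR2 (n (nxt r j)))
                              + IZR (b j) * rpair (theta (prv r j)) (toR2 (n j))
                              + rpair (theta (prv r j)) (toR2 (n (prv r j)))).
    - apply kink_of_pairings; [exact (fan_det j Hj) | exact (selfint j Hj) |].
      rewrite Hjj; symmetry; apply Hlin, in_cone_ray; exact Hj.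
    - rewrite Hjj, <- (Hlin j Hj _ (in_cone_next_ray r n j)), <- (Hlin _ Hp _ (in_cone_ray r n _)).
      lra. }
  destruct (choice_below r _ Hkink) as [ell Hell].
  assert (Hk : are_kinks r u theta (fun j => IZR (ell j))) by (intros j Hj; apply Hell, Hj).
  exists ell; split; [exact Hk|]; repeat split.
  - intros j Hj; apply Hell, Hj.
  - apply (zsum_cyclic_diff r _ (fun j => 2 * fst (theta j)) fan_r_pos).
    intros j Hj; destruct (Hk j Hj) as [K _]; rewrite mult_IZR; lra.
  - apply (zsum_cyclic_diff r _ (fun j => 2 * snd (theta j)) fan_r_pos).
    intros j Hj; destruct (Hk j Hj) as [_ K]; rewrite mult_IZR; lra.
Qed.

Lemma support_function_of_twisting (ell : nat -> Z) :
  twisting_numbers r b u ell ->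
  exists (vt : R * R -> R) (theta : nat -> R * R),
    semi_integral_support_with r n vt theta /\ are_kinks r u theta (fun j => IZR (ell j)).
Proof.
  intros (Hev & Hsum1 & Hsum2); pose proof fan_r_pos as Hr.
  set (v := toR2 (n 0%nat)); set (w := toR2 (n (nxt r 0))).
  (* [theta_0] pairs to [1/2] with both [v] and [w] since [det (v, w) = 1] *)
  set (theta := pieces_of_kinks u ell (/ 2 * (snd w - snd v), / 2 * (fst v - fst w))).
  assert (Hk : are_kinks r u theta (fun j => IZR (ell j))).
  { assert (Hstep : forall j, (0 < j < r)%nat ->
              fst (theta j) - fst (theta (prv r j)) = IZR (ell j) / 2 * IZR (fst (u j)) /\
              snd (theta j) - snd (theta (prv r j)) = IZR (ell j) / 2 * IZR (snd (u j))).
    { intros [|j] Hj; [lia|]; rewrite prv_S by lia; unfold theta; simpl; split; ring. }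
    intros [|j] Hj; [|apply Hstep; lia].
    assert (C1 : IZR (ell 0%nat * fst (u 0%nat)) = 2 * fst (theta 0%nat) - 2 * fst (theta (prv r 0))).
    { apply (cyclic_diff_0 r (fun j => ell j * fst (u j))%Z (fun j => 2 * fst (theta j)) Hr);
        [|exact Hsum1].
      intros j Hj'; destruct (Hstep j Hj') as [K _]; rewrite mult_IZR; lra. }
    assert (C2 : IZR (ell 0%nat * snd (u 0%nat)) = 2 * snd (theta 0%nat) - 2 * snd (theta (prv r 0))).
    { apply (cyclic_diff_0 r (fun j => ell j * snd (u j))%Z (fun j => 2 * snd (theta j)) Hr);
        [|exact Hsum2].
      intros j Hj'; destruct (Hstep j Hj') as [_ K]; rewrite mult_IZR; lra. }
    rewrite mult_IZR in C1, C2; split; lra. }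
  assert (Hhalf : forall j, (j < r)%nat ->
            half_integer (rpair (theta j) (toR2 (n j))) /\
            half_integer (rpair (theta j) (toR2 (n (nxt r j))))).
  { induction j as [|j IH]; intros Hj.
    - pose proof (fan_det 0 Hr) as Hd; apply (f_equal IZR) in Hd; rewrite <- rdet_IZR in Hd.
      fold v w in Hd; split; exists 0%Z; unfold theta, rpair, rdet in *; simpl in *; lra.
    - destruct (IH ltac:(lia)) as [Ha Hc]; rewrite nxt_small in Hc by lia.
      rewrite !(rpair_kink theta _ (S j) _ Hk Hj), prv_S by lia.
      replace (rdet (toR2 (n (S j))) (toR2 (n (S j)))) with 0 by (unfold rdet; ring).
      rewrite rdet_IZR, fan_det, (rpair_selfint _ _ _ _ _ (selfint (S j) Hj)), prv_S by lia.
      split; [rewrite Rmult_0_r, Rplus_0_r; exact Hc|].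
      rewrite Rmult_1_r; apply half_integer_step; auto. }
  destruct (choice (fun x j => (j < r)%nat /\ in_cone r n j x) cones_cover) as [pick Hpick].
  set (vt := fun x => rpair (theta (pick x)) x).
  assert (Hlin : forall j x, (j < r)%nat -> in_cone r n j x -> vt x = rpair (theta j) x).
  { intros j x Hj Hx; destruct (Hpick x) as [Hpx Hcx].
    exact (glue_pieces theta _ _ _ x Hk Hpx Hj Hcx Hx). }
  exists vt, theta; split; [split; [|split] | exact Hk].
  - exact (continuous_glued r n theta vt fan_det cones_cover Hlin).
  - intros j Hj x Hx; apply Hlin; auto.
  - intros j Hj; rewrite (Hlin j _ Hj (in_cone_ray r n j)); apply (Hhalf j Hj).
Qed.

Lemma support_function_unique (l : nat -> R) vt1 vt2 theta1 theta2 :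
  semi_integral_support_with r n vt1 theta1 -> are_kinks r u theta1 l ->
  semi_integral_support_with r n vt2 theta2 -> are_kinks r u theta2 l ->
  exists m : Z * Z, forall x, vt2 x = vt1 x + rpair (toR2 m) x.
Proof.
  intros (_ & L1 & H1) K1 (_ & L2 & H2) K2; pose proof fan_r_pos as Hr.
  set (D := (fst (theta2 0%nat) - fst (theta1 0%nat), snd (theta2 0%nat) - snd (theta1 0%nat))).
  assert (Hconst : forall j, (j < r)%nat ->
            forall x, rpair (theta2 j) x = rpair (theta1 j) x + rpair D x).
  { induction j as [|j IH]; intros Hj x; [unfold D, rpair; simpl; ring|].
    rewrite (rpair_kink theta2 l (S j) x K2 Hj), (rpair_kink theta1 l (S j) x K1 Hj), prv_S, IH
      by lia; ring. }
  assert (Hint : forall y, in_cone r n 0 y -> half_integer (vt2 y) -> half_integer (vt1 y) ->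
                   exists k, rpair D y = IZR k).
  { intros y Hy Hy2 Hy1; destruct (half_integer_sub _ _ Hy2 Hy1) as [k Hk]; exists k.
    rewrite <- Hk, (L1 0%nat Hr y Hy), (L2 0%nat Hr y Hy), Hconst by exact Hr; ring. }
  destruct (Hint _ (in_cone_ray r n 0) (H2 0%nat Hr) (H1 0%nat Hr)) as [a Ha].
  destruct (Hint _ (in_cone_next_ray r n 0) (H2 _ (nxt_lt r 0 Hr)) (H1 _ (nxt_lt r 0 Hr)))
    as [c Hc].
  set (m := ((a * snd (n (nxt r 0)) - c * snd (n 0%nat))%Z,
             (c * fst (n 0%nat) - a * fst (n (nxt r 0)))%Z)).
  assert (HDm : D = toR2 m).
  { rewrite (rpair_dual_basis D _ _ (fan_det 0 Hr)), Ha, Hc.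
    unfold m, toR2; simpl; rewrite !minus_IZR, !mult_IZR; reflexivity. }
  exists m; intros x; destruct (cones_cover x) as (j & Hj & Hx).
  rewrite (L1 j Hj x Hx), (L2 j Hj x Hx), Hconst, HDm by exact Hj; reflexivity.
Qed.

End SupportFunctions.

Theorem proposition4p3 (r : nat) (n : nat -> Z * Z) (b : nat -> Z) (u : nat -> Z * Z)
  (Hfan : complete_smooth_fan r n) (Hb : selfint_numbers r n b) (Hu : u_vectors r n u) :
  (* (1) kinks of a semi-integral support function are integral twisting numbers *)
  (forall (vt : R * R -> R) (theta : nat -> R * R),
     semi_integral_support_with r n vt theta ->
     exists ell : nat -> Z,
       are_kinks r u theta (fun j => IZR (ell j)) /\ twisting_numbers r b u ell) /\
  (* (2) every set of twisting numbers arises, uniquely up to an element of M *)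
  (forall ell : nat -> Z, twisting_numbers r b u ell ->
     (exists (vt : R * R -> R) (theta : nat -> R * R),
        semi_integral_support_with r n vt theta /\
        are_kinks r u theta (fun j => IZR (ell j))) /\
     (forall (vt1 vt2 : R * R -> R) (theta1 theta2 : nat -> R * R),
        semi_integral_support_with r n vt1 theta1 ->
        are_kinks r u theta1 (fun j => IZR (ell j)) ->
        semi_integral_support_with r n vt2 theta2 ->
        are_kinks r u theta2 (fun j => IZR (ell j)) ->
        exists m : Z * Z, forall x : R * R, vt2 x = vt1 x + rpair (toR2 m) x)).
Proof.
  split.
  - exact (kinks_of_support_function r n b u Hfan Hb Hu).
  - intros ell Hell; split.
    + exact (support_function_of_twisting r n b u Hfan Hb Hu ell Hell).
    + exact (support_function_unique r n u Hfan Hu (fun j => IZR (ell j))).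
Qed.
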